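(* Let $c_1>0$, $c_2>0$ and $k\in\mathbb{R}\setminus\{0\}$, and consider the system on $\mathbb{R}^3$ $$\dot z_1=\frac1{c_2}z_2z_3,\qquad \dot z_2=-\frac1{c_1}z_1z_3,\qquad \dot z_3=-\frac{k}{c_1}z_1 .$$ Let $$\Pi(z_1,z_2,z_3)=\begin{pmatrix}0&-\frac1kz_3&-1\\ \frac1kz_3&0&0\\ 1&0&0\end{pmatrix},\qquad \widetilde H(z)=-\frac{k}{2c_1}\Big(z_1^2+\frac{c_1}{c_2}z_2^2\Big),\qquad \widetilde C(z)=z_2-\frac1{2k}z_3^2 .$$ Then the system has the Hamilton-Poisson realization $(\mathbb{R}^3,\Pi,\widetilde H)$ with Casimir $\widetilde C$; that is, $\Pi$ defines a Poisson bracket $\{f,g\}=(\nabla f)^T\Pi\nabla g$ on $\mathbb{R}^3$, the system reads $\dot z=\Pi(z)\nabla\widetilde H(z)$, and $\{\widetilde C,f\}=0$ for all $f\in C^\infty(\mathbb{R}^3,\mathbb{R})$. *)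

From Stdlib Require Import Reals.
From Coquelicot Require Import Coquelicot.
Open Scope R_scope.

(* Points of R^3, written ((z1, z2), z3); coordinates indexed 0,1,2. *)
Definition pt := (R * R * R)%type.

Definition coord (z : pt) (i : nat) : R :=
  match i with O => fst (fst z) | S O => snd (fst z) | _ => snd z end.

Definition upd (z : pt) (i : nat) (t : R) : pt :=
  match i with
  | O => (t, snd (fst z), snd z)
  | S O => (fst (fst z), t, snd z)
  | _ => (fst (fst z), snd (fst z), t)
  end.

Definition partial (i : nat) (f : pt -> R) (z : pt) : R :=
  Derive (fun t => f (upd z i t)) (coord z i).

Definition sum3 (g : nat -> R) : R := g 0%nat + g 1%nat + g 2%nat.

Definition mxfield := pt -> nat -> nat -> R.

Definition bracket (P : mxfield) (f g : pt -> R) (z : pt) : R :=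
  sum3 (fun i => sum3 (fun j => partial i f z * P z i j * partial j g z)).

(* Pi defines a Poisson bracket: Pi is skew-symmetric and satisfies the
   Jacobi identity in its coordinate (Poisson tensor) form
   sum_l (Pi_li d_l Pi_jk + Pi_lj d_l Pi_ki + Pi_lk d_l Pi_ij) = 0. *)
Definition is_Poisson_tensor (P : mxfield) : Prop :=
  (forall z (i j : nat), (i < 3)%nat -> (j < 3)%nat -> P z i j = - P z j i) /\
  (forall z (i j k : nat), (i < 3)%nat -> (j < 3)%nat -> (k < 3)%nat ->
     sum3 (fun l =>
       P z l i * partial l (fun w => P w j k) z
     + P z l j * partial l (fun w => P w k i) z
     + P z l k * partial l (fun w => P w i j) z) = 0).

Definition Pi (k : R) : mxfield := fun z i j =>
  let z3 := coord z 2 in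
  match i, j with
  | O, S O => - (1 / k) * z3
  | O, S (S O) => -1
  | S O, O => (1 / k) * z3
  | S (S O), O => 1
  | _, _ => 0
  end.

Definition Htilde (c1 c2 k : R) (z : pt) : R :=
  - (k / (2 * c1)) * ((coord z 0) ^ 2 + (c1 / c2) * (coord z 1) ^ 2).

Definition Ctilde (k : R) (z : pt) : R :=
  coord z 1 - (1 / (2 * k)) * (coord z 2) ^ 2.

Definition Xfield (c1 c2 k : R) (z : pt) (i : nat) : R :=
  match i with
  | O => (1 / c2) * coord z 1 * coord z 2
  | S O => - (1 / c1) * coord z 0 * coord z 2
  | _ => - (k / c1) * coord z 0
  end.

(* The matrix Pi has only one non-constant entry pair, Pi_01 = -Pi_10 = -z3/k,
   depending on z3 alone, while the third row and column are constant; so the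
   Jacobi identity reduces to a finite check, and Pi grad H reproduces the
   vector field componentwise.  The gradient of C is (0, 1, -z3/k), which is
   a left null vector of Pi(z), so {C, f} vanishes whatever f is. *)
From Stdlib Require Import Reals Lra Lia.
From Coquelicot Require Import Coquelicot.
Open Scope R_scope.

Ltac compute_derives :=
  repeat match goal with |- context [Derive ?f ?x] =>
    let l := fresh "l" in let H := fresh "H" in
    evar (l : R);
    assert (H : is_derive f x l)
      by (subst l; solve [auto_derive; [auto | reflexivity] | auto_derive; reflexivity]);
    rewrite (is_derive_unique f x _ H); subst l; clear H
  end.

Lemma bracket_by_rows (P : mxfield) (f g : pt -> R) (z : pt) :
  bracket P f g z =
  sum3 (fun j => sum3 (fun i => partial i f z * P z i j) * partial j g z).
Proof. unfold bracket, sum3; ring. Qed.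

Lemma bracket_eq0_of_left_null (P : mxfield) (f g : pt -> R) (z : pt) :
  (forall j, (j < 3)%nat -> sum3 (fun i => partial i f z * P z i j) = 0) ->
  bracket P f g z = 0.
Proof.
  intros Hnull; rewrite bracket_by_rows; unfold sum3 at 1.
  rewrite !Hnull by lia; ring.
Qed.

Lemma Pi_skew (k : R) (z : pt) (i j : nat) :
  (i < 3)%nat -> (j < 3)%nat -> Pi k z i j = - Pi k z j i.
Proof.
  intros Hi Hj.
  destruct i as [|[|[|]]]; try lia; destruct j as [|[|[|]]]; try lia;
    unfold Pi; simpl; ring.
Qed.

Lemma Pi_jacobi (k : R) (hk : k <> 0) (z : pt) (i j m : nat) :
  (i < 3)%nat -> (j < 3)%nat -> (m < 3)%nat ->
  sum3 (fun l =>
      Pi k z l i * partial l (fun w => Pi k w j m) z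
    + Pi k z l j * partial l (fun w => Pi k w m i) z
    + Pi k z l m * partial l (fun w => Pi k w i j) z) = 0.
Proof.
  destruct z as [[a b] c]; intros Hi Hj Hm.
  destruct i as [|[|[|]]]; try lia; destruct j as [|[|[|]]]; try lia;
    destruct m as [|[|[|]]]; try lia;
    unfold sum3, partial, Pi; simpl; compute_derives; field; auto.
Qed.

Lemma Pi_is_Poisson_tensor (k : R) : k <> 0 -> is_Poisson_tensor (Pi k).
Proof.
  intros hk; split.
  - exact (Pi_skew k).
  - exact (Pi_jacobi k hk).
Qed.

Lemma partial_Htilde (c1 c2 k : R) (z : pt) (i : nat) :
  c1 <> 0 -> c2 <> 0 -> (i < 3)%nat ->
  partial i (Htilde c1 c2 k) z =
  match i with
  | O => - (k / c1) * coord z 0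
  | S O => - (k / c2) * coord z 1
  | _ => 0
  end.
Proof.
  destruct z as [[a b] c]; intros hc1 hc2 Hi.
  destruct i as [|[|[|]]]; try lia;
    unfold partial, Htilde; simpl; compute_derives; field; auto.
Qed.

Lemma partial_Ctilde (k : R) (z : pt) (i : nat) :
  k <> 0 -> (i < 3)%nat ->
  partial i (Ctilde k) z =
  match i with
  | O => 0
  | S O => 1
  | _ => - (1 / k) * coord z 2
  end.
Proof.
  destruct z as [[a b] c]; intros hk Hi.
  destruct i as [|[|[|]]]; try lia;
    unfold partial, Ctilde; simpl; compute_derives; field; auto.
Qed.

Lemma Xfield_hamiltonian (c1 c2 k : R) (z : pt) (i : nat) :
  c1 <> 0 -> c2 <> 0 -> k <> 0 -> (i < 3)%nat ->
  Xfield c1 c2 k z i = sum3 (fun j => Pi k z i j * partial j (Htilde c1 c2 k) z).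
Proof.
  intros hc1 hc2 hk Hi; unfold sum3.
  rewrite !partial_Htilde by (auto || lia).
  destruct i as [|[|[|]]]; try lia; unfold Xfield, Pi; simpl; field; auto.
Qed.

Lemma grad_Ctilde_left_null (k : R) (z : pt) (j : nat) :
  k <> 0 -> (j < 3)%nat ->
  sum3 (fun i => partial i (Ctilde k) z * Pi k z i j) = 0.
Proof.
  intros hk Hj; unfold sum3.
  rewrite !partial_Ctilde by (auto || lia).
  destruct j as [|[|[|]]]; try lia; unfold Pi; simpl; field; auto.
Qed.

Theorem proposition5p4 (c1 c2 k : R) (hc1 : 0 < c1) (hc2 : 0 < c2) (hk : k <> 0) :
  is_Poisson_tensor (Pi k) /\
  (forall z (i : nat), (i < 3)%nat ->
     Xfield c1 c2 k z i = sum3 (fun j => Pi k z i j * partial j (Htilde c1 c2 k) z)) /\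
  (forall (f : pt -> R) (z : pt), bracket (Pi k) (Ctilde k) f z = 0).
Proof.
  assert (hc1' : c1 <> 0) by lra.
  assert (hc2' : c2 <> 0) by lra.
  split; [|split].
  - exact (Pi_is_Poisson_tensor k hk).
  - intros z i Hi; exact (Xfield_hamiltonian c1 c2 k z i hc1' hc2' hk Hi).
  - intros f z; apply bracket_eq0_of_left_null; intros j Hj.
    exact (grad_Ctilde_left_null k z j hk Hj).
Qed.
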